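(* Let $\mathcal H,\mathcal L$ be Hilbert spaces, $\mathcal A=\bigcup_i\mathcal A_i\subset\mathcal H$ a closed proximal union of linear subspaces, and $\Phi:\mathcal H\to\mathcal L$ a bounded linear operator that is bi-Lipschitz on $\mathcal A$ with constants $0<\alpha\le\beta$. Let $\mu>0$ satisfy $\beta\le 1/\mu<1.5\,\alpha$ and $\mu\alpha<1$. Let $x\in\mathcal H$ be arbitrary, $e\in\mathcal L$, $y=\Phi x+e$, $x_{\mathcal A}\in p_{\mathcal A}(x)$, and $e_{\mathcal A}=y-\Phi x_{\mathcal A}=\Phi(x-x_{\mathcal A})+e$. Consider the Iterative Projection Algorithm: $x^0=0$ and $x^{n+1}\in p_{\mathcal A}\big(x^n+\mu\Phi^*(y-\Phi x^n)\big)$ (any choice of element). Assume $x_{\mathcal A}\neq0$, $e_{\mathcal A}\ne0$, and let $\delta>0$ with $\delta\|e_{\mathcal A}\|<\|x_{\mathcal A}\|$. Then after $$n^\star=\left\lceil 2\,\frac{\ln\!\big(\delta\|e_{\mathcal A}\|/\|x_{\mathcal A}\|\big)}{\ln\!\big(2/(\mu\alpha)-2\big)}\right\rceil$$ iterations, $$\|x-x^{n^\star}\|\le\big(c^{1/2}+\delta\big)\|e_{\mathcal A}\|+\|x_{\mathcal A}-x\|,\qquad c=\frac{4}{3\alpha-2/\mu}.$$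
   Context: $\Phi^*$ is the adjoint of $\Phi$. A set $\mathcal B$ is proximal if for every $w$ the set $p_{\mathcal B}(w)=\{\tilde w\in\mathcal B:\|\tilde w-w\|=\inf_{\hat w\in\mathcal B}\|\hat w-w\|\}$ is nonempty. $\Phi$ is bi-Lipschitz on $\mathcal A$ with constants $0<\alpha\le\beta$ if for all $x_1,x_2\in\mathcal A$: $\alpha\|x_1-x_2\|^2\le\|\Phi(x_1-x_2)\|^2\le\beta\|x_1-x_2\|^2$. *)

From Stdlib Require Import Reals ZArith.
Open Scope R_scope.

Record Hilbert := {
  hcar :> Type;
  hzero : hcar;
  hadd : hcar -> hcar -> hcar;
  hopp : hcar -> hcar;
  hscal : R -> hcar -> hcar;
  hinner : hcar -> hcar -> R;
  haddA : forall x y z, hadd x (hadd y z) = hadd (hadd x y) z;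
  haddC : forall x y, hadd x y = hadd y x;
  hadd0 : forall x, hadd x hzero = x;
  haddN : forall x, hadd x (hopp x) = hzero;
  hscalA : forall a b x, hscal a (hscal b x) = hscal (a * b) x;
  hscal1 : forall x, hscal 1 x = x;
  hscalDr : forall a x y, hscal a (hadd x y) = hadd (hscal a x) (hscal a y);
  hscalDl : forall a b x, hscal (a + b) x = hadd (hscal a x) (hscal b x);
  hinner_sym : forall x y, hinner x y = hinner y x;
  hinner_addl : forall x y z, hinner (hadd x y) z = hinner x z + hinner y z;
  hinner_scall : forall a x y, hinner (hscal a x) y = a * hinner x y;
  hinner_pos : forall x, 0 <= hinner x x;
  hinner_def : forall x, hinner x x = 0 -> x = hzero;
  hcomplete : forall u : nat -> hcar,
    (forall eps, 0 < eps -> exists N, forall m n, (N <= m)%nat -> (N <= n)%nat ->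
        sqrt (hinner (hadd (u m) (hopp (u n))) (hadd (u m) (hopp (u n)))) < eps) ->
    exists l, forall eps, 0 < eps -> exists N, forall n, (N <= n)%nat ->
        sqrt (hinner (hadd (u n) (hopp l)) (hadd (u n) (hopp l))) < eps
}.

Arguments hzero {h}.
Arguments hadd {h}.
Arguments hopp {h}.
Arguments hscal {h}.
Arguments hinner {h}.

Definition hsub {H : Hilbert} (x y : H) : H := hadd x (hopp y).
Definition hnorm {H : Hilbert} (x : H) : R := sqrt (hinner x x).

Definition hconv {H : Hilbert} (u : nat -> H) (l : H) : Prop :=
  forall eps, 0 < eps -> exists N, forall n, (N <= n)%nat -> hnorm (hsub (u n) l) < eps.

Definition hclosed {H : Hilbert} (S : H -> Prop) : Prop :=
  forall (u : nat -> H) (l : H), (forall n, S (u n)) -> hconv u l -> S l.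

Definition subspace {H : Hilbert} (S : H -> Prop) : Prop :=
  S hzero /\ (forall x y, S x -> S y -> S (hadd x y)) /\
  (forall a x, S x -> S (hscal a x)).

Definition union_fam {H : Hilbert} {I : Type} (Ai : I -> H -> Prop) : H -> Prop :=
  fun x => exists i, Ai i x.

(* p_B(w) as a predicate: the set of best approximations of w in B *)
Definition proj_set {H : Hilbert} (B : H -> Prop) (w : H) : H -> Prop :=
  fun v => B v /\ forall b, B b -> hnorm (hsub v w) <= hnorm (hsub b w).

Definition proximal {H : Hilbert} (B : H -> Prop) : Prop :=
  forall w, exists v, proj_set B w v.

Definition bounded_linear {H L : Hilbert} (Phi : H -> L) : Prop :=
  (forall x y, Phi (hadd x y) = hadd (Phi x) (Phi y)) /\
  (forall a x, Phi (hscal a x) = hscal a (Phi x)) /\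
  (exists K, forall x, hnorm (Phi x) <= K * hnorm x).

Definition is_adjoint {H L : Hilbert} (Phi : H -> L) (Phis : L -> H) : Prop :=
  forall x w, hinner (Phi x) w = hinner x (Phis w).

Definition bi_lipschitz {H L : Hilbert} (Phi : H -> L) (A : H -> Prop)
  (alpha beta : R) : Prop :=
  0 < alpha /\ alpha <= beta /\
  forall x1 x2, A x1 -> A x2 ->
    alpha * (hnorm (hsub x1 x2))^2 <= (hnorm (Phi (hsub x1 x2)))^2 /\
    (hnorm (Phi (hsub x1 x2)))^2 <= beta * (hnorm (hsub x1 x2))^2.

(* ceiling of a real number: - floor(-r), with Int_part = floor *)
Definition Rceil (r : R) : Z := (- Int_part (- r))%Z.

Definition IPA_seq {H L : Hilbert} (A : H -> Prop) (Phi : H -> L) (Phis : L -> H)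
  (mu : R) (y : L) (xs : nat -> H) : Prop :=
  xs 0%nat = hzero /\
  forall n, proj_set A (hadd (xs n) (hscal mu (Phis (hsub y (Phi (xs n)))))) (xs (S n)).

(* Write [r_n = |x_A - x^n|^2].  Testing the optimality of the projection [x^(n+1)]
   against the competitor [x_A], and using the bi-Lipschitz bounds together with
   [beta <= 1/mu], gives the one-step contraction
   [r_(n+1) <= k r_n + (4/alpha) |e_A|^2] with [k = 2/(mu alpha) - 2 \in (0,1)].
   Unrolling yields [r_n <= k^n |x_A|^2 + c |e_A|^2], where [c] is the fixed point
   [(4/alpha)/(1-k)]; the choice of [n*] makes [k^n* |x_A|^2 <= delta^2 |e_A|^2],
   and the triangle inequality through [x_A] concludes. *)

From Stdlib Require Import Reals ZArith Lra.
Open Scope R_scope.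

Section HilbertAlgebra.
Context {H : Hilbert}.
Implicit Types x y z : H.

Lemma hadd0l x : hadd hzero x = x.
Proof. rewrite haddC; apply hadd0. Qed.

Lemma hscal0 x : hscal 0 x = hzero.
Proof.
  set (s := hscal 0 x).
  assert (Hss : hadd s s = s) by (unfold s; rewrite <- hscalDl; f_equal; ring).
  rewrite <- (haddN _ s); rewrite <- Hss at 2.
  rewrite <- haddA, haddN, hadd0; reflexivity.
Qed.

Lemma hopp_scal x : hopp x = hscal (-1) x.
Proof.
  assert (Hx : hadd x (hscal (-1) x) = hzero).
  { rewrite <- (hscal1 _ x) at 1; rewrite <- hscalDl.
    replace (1 + -1) with 0 by ring; apply hscal0. }
  rewrite <- (hadd0 _ (hscal (-1) x)), <- (haddN _ x), haddA,
    (haddC _ (hscal (-1) x) x), Hx, hadd0l; reflexivity.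
Qed.

Lemma hopp0 : hopp (@hzero H) = hzero.
Proof. rewrite <- (hadd0l (hopp hzero)); apply haddN. Qed.

Lemma hsub0r x : hsub x hzero = x.
Proof. unfold hsub; rewrite hopp0; apply hadd0. Qed.

Lemma hinner_addr x y z : hinner x (hadd y z) = hinner x y + hinner x z.
Proof. rewrite hinner_sym, hinner_addl, (hinner_sym _ y), (hinner_sym _ z); reflexivity. Qed.

Lemma hinner_scalr a x y : hinner x (hscal a y) = a * hinner x y.
Proof. rewrite hinner_sym, hinner_scall, hinner_sym; reflexivity. Qed.

Lemma hinner_oppl x y : hinner (hopp x) y = - hinner x y.
Proof. rewrite hopp_scal, hinner_scall; ring. Qed.

Lemma hinner_oppr x y : hinner x (hopp y) = - hinner x y.
Proof. rewrite hopp_scal, hinner_scalr; ring. Qed.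

Lemma hinner0r y : hinner y hzero = 0.
Proof. rewrite <- (hscal0 hzero), hinner_scalr; ring. Qed.

End HilbertAlgebra.

(* Orients every pair [hinner a b], [hinner b a] occurring in the goal the same
   way, so that [ring] sees them as one atom. *)
Ltac hinner_sort :=
  repeat match goal with
  | |- context [@hinner ?h ?a ?b] =>
      match goal with
      | |- context [@hinner h b a] =>
          lazymatch a with b => fail | _ => rewrite (hinner_sym h b a) end
      end
  end.

Ltac hinner_expand :=
  unfold hsub;
  repeat progress rewrite ?hinner_addl, ?hinner_addr, ?hinner_oppl, ?hinner_oppr,
    ?hinner_scall, ?hinner_scalr;
  hinner_sort.

Section HilbertNorm.
Context {H : Hilbert}.
Implicit Types x y z : H.

Lemma hnorm_sq x : hnorm x ^ 2 = hinner x x.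
Proof. apply pow2_sqrt, hinner_pos. Qed.

Lemma hnorm_ge0 x : 0 <= hnorm x.
Proof. apply sqrt_pos. Qed.

Lemma hnorm_gt0 x : x <> hzero -> 0 < hnorm x.
Proof.
  intro Hx; apply sqrt_lt_R0.
  destruct (hinner_pos _ x) as [Hpos | Hzero]; [exact Hpos |].
  symmetry in Hzero; apply hinner_def in Hzero; contradiction.
Qed.

Lemma hnorm_le_of_sq x r : 0 <= r -> hnorm x ^ 2 <= r ^ 2 -> hnorm x <= r.
Proof. intros Hr Hsq; pose proof (hnorm_ge0 x); nra. Qed.

Lemma hinner_le_norm x y : hinner x y <= hnorm x * hnorm y.
Proof.
  pose proof (hnorm_ge0 x); pose proof (hnorm_ge0 y).
  destruct (Req_dec (hinner y y) 0) as [Hy | Hy].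
  { apply hinner_def in Hy; subst y; rewrite hinner0r; nra. }
  (* [0 <= | |y|^2 x - <x,y> y |^2] gives [<x,y>^2 <= |x|^2 |y|^2]. *)
  pose proof (hinner_pos _ (hsub (hscal (hinner y y) x) (hscal (hinner x y) y))) as Hpos.
  assert (Hexp : hinner (hsub (hscal (hinner y y) x) (hscal (hinner x y) y))
                        (hsub (hscal (hinner y y) x) (hscal (hinner x y) y))
                 = hinner y y * (hinner x x * hinner y y - hinner x y ^ 2)).
  { hinner_expand; ring. }
  rewrite Hexp in Hpos.
  pose proof (hinner_pos _ y).
  assert (Hsq : hinner x y ^ 2 <= (hnorm x * hnorm y) ^ 2).
  { rewrite Rpow_mult_distr, !hnorm_sq.
    apply Rmult_le_reg_l with (hinner y y); nra. }
  pose proof (Rmult_le_pos _ _ (hnorm_ge0 x) (hnorm_ge0 y)); nra.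
Qed.

Lemma hnorm_triangle (a b c : H) : hnorm (hsub a c) <= hnorm (hsub a b) + hnorm (hsub b c).
Proof.
  apply hnorm_le_of_sq.
  { pose proof (hnorm_ge0 (hsub a b)); pose proof (hnorm_ge0 (hsub b c)); lra. }
  assert (Hexp : hnorm (hsub a c) ^ 2 =
     hnorm (hsub a b) ^ 2 + 2 * hinner (hsub a b) (hsub b c) + hnorm (hsub b c) ^ 2).
  { rewrite !hnorm_sq; hinner_expand; ring. }
  pose proof (hinner_le_norm (hsub a b) (hsub b c)); lra.
Qed.

Lemma hnorm_subC x y : hnorm (hsub x y) = hnorm (hsub y x).
Proof. unfold hnorm; f_equal; hinner_expand; ring. Qed.

Lemma hnorm_sq_sub_shift (v u w : H) t :
  hnorm (hsub v (hadd u (hscal t w))) ^ 2 =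
  hnorm (hsub v u) ^ 2 - 2 * t * hinner (hsub v u) w + t ^ 2 * hnorm w ^ 2.
Proof.
  rewrite !hnorm_sq; unfold hsub; rewrite !hopp_scal, !hscalDr, !hscalA.
  hinner_expand; ring.
Qed.

(* Squaring [|v - (u + t w)| <= |z - (u + t w)|]; the [t^2 |w|^2] terms cancel. *)
Lemma proj_set_shift_le (A : H -> Prop) (u w v z : H) t :
  proj_set A (hadd u (hscal t w)) v -> A z ->
  hnorm (hsub v u) ^ 2 - 2 * t * hinner (hsub v u) w <=
  hnorm (hsub z u) ^ 2 - 2 * t * hinner (hsub z u) w.
Proof.
  intros [_ Hbest] Hz.
  assert (Hsq := pow_incr _ _ 2 (conj (hnorm_ge0 _) (Hbest z Hz))).
  rewrite !hnorm_sq_sub_shift in Hsq; lra.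
Qed.

End HilbertNorm.

Lemma linear_recurrence_bound (r : nat -> R) (k b : R) :
  0 <= k < 1 -> 0 <= b -> (forall n, r (S n) <= k * r n + b) ->
  forall n, r n <= k ^ n * r 0%nat + b / (1 - k).
Proof.
  intros Hk Hb Hrec.
  assert (Hfix : k * (b / (1 - k)) + b = b / (1 - k)) by (field; lra).
  assert (Hlim : 0 <= b / (1 - k)).
  { unfold Rdiv; apply Rmult_le_pos; [lra | apply Rlt_le, Rinv_0_lt_compat; lra]. }
  induction n as [|n IH]; simpl; [lra |].
  specialize (Hrec n).
  assert (k * r n <= k * (k ^ n * r 0%nat + b / (1 - k))) by (apply Rmult_le_compat_l; lra).
  lra.
Qed.

Lemma Rceil_to_nat_ge (r : R) : r <= INR (Z.to_nat (Rceil r)).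
Proof.
  assert (Hceil : r <= IZR (Rceil r)).
  { unfold Rceil; rewrite opp_IZR; destruct (base_Int_part (- r)); lra. }
  destruct (Z_le_gt_dec 0 (Rceil r)) as [Hpos | Hneg].
  - rewrite INR_IZR_INZ, Z2Nat.id by exact Hpos; exact Hceil.
  - apply Z.gt_lt, IZR_lt in Hneg; pose proof (pos_INR (Z.to_nat (Rceil r))); lra.
Qed.

Lemma pow_ceil_log_le (k p : R) :
  0 < k < 1 -> 0 < p -> k ^ Z.to_nat (Rceil (ln p / ln k)) <= p.
Proof.
  intros Hk Hp.
  set (n := Z.to_nat (Rceil (ln p / ln k))).
  assert (Hlk : ln k < 0) by (rewrite <- ln_1; apply ln_increasing; lra).
  assert (Hn : ln p / ln k <= INR n) by apply Rceil_to_nat_ge.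
  assert (Hlog : INR n * ln k <= ln p).
  { replace (ln p) with (ln p / ln k * ln k) by (field; lra).
    rewrite !(Rmult_comm _ (ln k)); apply Rmult_le_compat_neg_l; lra. }
  apply Rnot_lt_le; intro Hlt.
  apply ln_increasing in Hlt; [| exact Hp].
  rewrite ln_pow in Hlt by lra; lra.
Qed.

Lemma step_size_lower_bound (mu alpha : R) :
  0 < mu -> 1 / mu < 3 / 2 * alpha -> 2 / 3 < mu * alpha.
Proof.
  intros Hmu Hhi.
  apply Rmult_lt_compat_r with (r := mu) in Hhi; [| exact Hmu].
  replace (1 / mu * mu) with 1 in Hhi by (field; lra); lra.
Qed.

Lemma ipa_rate_bounds (mu alpha : R) :
  0 < mu -> mu * alpha < 1 -> 1 / mu < 3 / 2 * alpha ->
  0 < 2 / (mu * alpha) - 2 < 1.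
Proof.
  intros Hmu Hlo Hhi.
  assert (Hma := step_size_lower_bound _ _ Hmu Hhi).
  assert (Halpha : 0 < alpha) by nra.
  assert (Hpos : 0 < 2 / (mu * alpha)) by (apply Rdiv_lt_0_compat; lra).
  assert (Hinv : 2 / (mu * alpha) * (mu * alpha) = 2) by (field; lra).
  split; nra.
Qed.

Section IterativeProjection.
Context {H L : Hilbert} (A : H -> Prop) (Phi : H -> L) (Phis : L -> H)
  (alpha beta mu : R).
Hypothesis Phi_add : forall x y, Phi (hadd x y) = hadd (Phi x) (Phi y).
Hypothesis Phi_scal : forall a x, Phi (hscal a x) = hscal a (Phi x).
Hypothesis Phis_adj : is_adjoint Phi Phis.
Hypothesis Phi_bilip : bi_lipschitz Phi A alpha beta.
Hypothesis mu_gt0 : 0 < mu.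
Hypothesis beta_le_inv_mu : beta <= 1 / mu.

Lemma Phi_sub x y : Phi (hsub x y) = hsub (Phi x) (Phi y).
Proof. unfold hsub; rewrite Phi_add, !hopp_scal, Phi_scal; reflexivity. Qed.

Lemma ipa_step_contraction (y : L) (z u v : H) :
  A z -> A u -> proj_set A (hadd u (hscal mu (Phis (hsub y (Phi u))))) v ->
  hnorm (hsub z v) ^ 2 <=
  (2 / (mu * alpha) - 2) * hnorm (hsub z u) ^ 2 + 4 / alpha * hnorm (hsub y (Phi z)) ^ 2.
Proof.
  intros Hz Hu Hv.
  destruct Phi_bilip as [alpha_gt0 [_ Hlip]].
  assert (Hopt := proj_set_shift_le _ _ _ _ _ _ Hv Hz).
  rewrite <- !Phis_adj in Hopt.
  destruct (Hlip v u (proj1 Hv) Hu) as [_ Hvu].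
  destruct (Hlip z u Hz Hu) as [Hzu _].
  destruct (Hlip z v Hz (proj1 Hv)) as [Hzv _].
  (* [2y - Phi z - Phi v = Phi (z - v) + 2 (y - Phi z)]: its squared norm
     controls the cross terms between [Phi (z - v)] and the noise. *)
  pose proof (hinner_pos _ (hsub (hscal 2 y) (hadd (Phi z) (Phi v)))) as Hres.
  set (m := 1 / mu) in *.
  assert (Hopt_m : m * hnorm (hsub v u) ^ 2 - 2 * hinner (Phi (hsub v u)) (hsub y (Phi u)) <=
                   m * hnorm (hsub z u) ^ 2 - 2 * hinner (Phi (hsub z u)) (hsub y (Phi u))).
  { assert (Hscale : forall N X, m * N - 2 * X = m * (N - 2 * mu * X))
      by (intros; unfold m; field; lra).
    rewrite !Hscale; apply Rmult_le_compat_l; [| exact Hopt].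
    unfold m; apply Rlt_le, Rdiv_lt_0_compat; lra. }
  assert (Hvu_m : hnorm (Phi (hsub v u)) ^ 2 <= m * hnorm (hsub v u) ^ 2).
  { pose proof (pow2_ge_0 (hnorm (hsub v u))); nra. }
  assert (Hkey : alpha * hnorm (hsub z v) ^ 2 <=
                 2 * (m - alpha) * hnorm (hsub z u) ^ 2 + 4 * hnorm (hsub y (Phi z)) ^ 2).
  { rewrite !Phi_sub in *; rewrite !hnorm_sq in *.
    revert Hopt_m Hvu_m Hzu Hzv Hres; hinner_expand; intros; lra. }
  apply Rmult_le_reg_l with alpha; [exact alpha_gt0 |].
  replace (alpha * ((2 / (mu * alpha) - 2) * hnorm (hsub z u) ^ 2
                     + 4 / alpha * hnorm (hsub y (Phi z)) ^ 2))
    with (2 * (m - alpha) * hnorm (hsub z u) ^ 2 + 4 * hnorm (hsub y (Phi z)) ^ 2)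
    by (unfold m; field; lra).
  exact Hkey.
Qed.

Lemma ipa_error_bound (y : L) (xs : nat -> H) (z : H) :
  A hzero -> A z -> IPA_seq A Phi Phis mu y xs ->
  mu * alpha < 1 -> 1 / mu < 3 / 2 * alpha ->
  forall n, hnorm (hsub z (xs n)) ^ 2 <=
    (2 / (mu * alpha) - 2) ^ n * hnorm z ^ 2
    + 4 / (3 * alpha - 2 / mu) * hnorm (hsub y (Phi z)) ^ 2.
Proof.
  intros A0 Hz [xs0 Hstep] Hlo Hhi n.
  destruct Phi_bilip as [alpha_gt0 _].
  assert (Hin : forall n, A (xs n)).
  { intros [|j]; [rewrite xs0; exact A0 | exact (proj1 (Hstep j))]. }
  assert (Hma := step_size_lower_bound _ _ mu_gt0 Hhi).
  assert (Hk := ipa_rate_bounds _ _ mu_gt0 Hlo Hhi).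
  replace (4 / (3 * alpha - 2 / mu) * hnorm (hsub y (Phi z)) ^ 2)
    with (4 / alpha * hnorm (hsub y (Phi z)) ^ 2 / (1 - (2 / (mu * alpha) - 2)))
    by (field; repeat split; lra).
  replace (hnorm z) with (hnorm (hsub z (xs 0%nat))) by (rewrite xs0, hsub0r; reflexivity).
  apply (linear_recurrence_bound (fun n => hnorm (hsub z (xs n)) ^ 2)); [lra | |].
  - apply Rmult_le_pos; [apply Rlt_le, Rdiv_lt_0_compat; lra | apply pow2_ge_0].
  - intro j; exact (ipa_step_contraction y z _ _ Hz (Hin j) (Hstep j)).
Qed.

End IterativeProjection.

Lemma union_fam_subspace0 {H : Hilbert} {I : Type} (Ai : I -> H -> Prop) (z : H) :
  (forall i, subspace (Ai i)) -> union_fam Ai z -> union_fam Ai hzero.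
Proof. intros Hsub [i _]; exists i; apply Hsub. Qed.

Theorem theorem2 (H L : Hilbert) (I : Type) (Ai : I -> H -> Prop)
  (Phi : H -> L) (Phis : L -> H) (alpha beta mu delta : R)
  (x : H) (e : L) (xA : H) (xs : nat -> H) :
  (forall i, subspace (Ai i)) ->
  hclosed (union_fam Ai) ->
  proximal (union_fam Ai) ->
  bounded_linear Phi ->
  is_adjoint Phi Phis ->
  bi_lipschitz Phi (union_fam Ai) alpha beta ->
  0 < mu -> beta <= 1 / mu -> 1 / mu < 3 / 2 * alpha -> mu * alpha < 1 ->
  proj_set (union_fam Ai) x xA ->
  IPA_seq (union_fam Ai) Phi Phis mu (hadd (Phi x) e) xs ->
  let y := hadd (Phi x) e in
  let eA := hsub y (Phi xA) in
  xA <> hzero -> eA <> hzero ->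
  0 < delta -> delta * hnorm eA < hnorm xA ->
  let nstar := Z.to_nat (Rceil (2 * ln (delta * hnorm eA / hnorm xA)
                                  / ln (2 / (mu * alpha) - 2))) in
  let c := 4 / (3 * alpha - 2 / mu) in
  hnorm (hsub x (xs nstar)) <= (sqrt c + delta) * hnorm eA + hnorm (hsub xA x).
Proof.
  intros Hsub _ _ [Phi_add [Phi_scal _]] Hadj Hbl Hmu Hbe Hhi Hlo [HxA _] Hipa
    y eA HxA0 HeA0 Hdel _ nstar c.
  assert (Hbound := ipa_error_bound _ _ _ _ _ _ Phi_add Phi_scal Hadj Hbl Hmu Hbe y xs xA
                      (union_fam_subspace0 _ _ Hsub HxA) HxA Hipa Hlo Hhi nstar).
  fold c eA in Hbound.
  assert (HnxA := hnorm_gt0 _ HxA0); assert (HneA := hnorm_gt0 _ HeA0).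
  set (q := delta * hnorm eA / hnorm xA) in nstar.
  assert (Hq : 0 < q) by (apply Rdiv_lt_0_compat; nra).
  assert (Hrate : (2 / (mu * alpha) - 2) ^ nstar <= q ^ 2).
  { unfold nstar; replace (2 * ln q) with (ln (q ^ 2)) by (rewrite ln_pow; simpl; lra).
    apply pow_ceil_log_le; [| apply pow_lt; exact Hq].
    exact (ipa_rate_bounds _ _ Hmu Hlo Hhi). }
  assert (Hc : 0 <= c) by (unfold c; apply Rlt_le, Rdiv_lt_0_compat; lra).
  assert (HxA_close : hnorm (hsub xA (xs nstar)) <= (sqrt c + delta) * hnorm eA).
  { apply hnorm_le_of_sq; [pose proof (sqrt_pos c); nra |].
    assert (Hqx : q ^ 2 * hnorm xA ^ 2 = delta ^ 2 * hnorm eA ^ 2) by (unfold q; field; lra).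
    assert (Hcross : 0 <= 2 * sqrt c * delta * hnorm eA ^ 2).
    { pose proof (sqrt_pos c); pose proof (pow2_ge_0 (hnorm eA)); nra. }
    pose proof (Rmult_le_compat_r (hnorm xA ^ 2) _ _ (pow2_ge_0 _) Hrate).
    replace (((sqrt c + delta) * hnorm eA) ^ 2)
      with (c * hnorm eA ^ 2 + delta ^ 2 * hnorm eA ^ 2 + 2 * sqrt c * delta * hnorm eA ^ 2)
      by (rewrite <- (sqrt_sqrt c Hc) at 1; ring).
    lra. }
  pose proof (hnorm_triangle x xA (xs nstar)).
  rewrite (hnorm_subC x xA) in *; lra.
Qed.
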